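(* Let $S$ be a hyperstonean space, let $N$ be the family of meager subsets of $S$ and $M$ the family of symmetric differences of open sets and meager sets. Then $(S,M,N)$ is a compact strictly localizable enhanced measurable space. Moreover, every continuous open map $f:S\to S'$ between hyperstonean spaces satisfies $f^*M'\subset M$ and $f^*N'\subset N$, so this construction defines a functor $\mathrm{TM}:\mathsf{HStonean}\to\mathsf{CSLEMS}$.
   Context: A hyperstonean space is a compact Hausdorff totally disconnected space in which the closure of every open set is open and such that for every nonempty open $U$ there is a map $\nu$ from open sets to $[0,\infty)$ with $\nu(\emptyset)=0$, $\nu(U_1)+\nu(U_2)=\nu(U_1\cup U_2)+\nu(U_1\cap U_2)$, monotone, preserving suprema of directed families, with $\nu(\overline V)=\nu(V)$ for all open $V$, and $\nu(U)\neq0$. $\mathsf{HStonean}$: hyperstonean spaces and continuous open maps. Enhanced measurable space $(X,M,N)$: $M$ a $\sigma$-algebra, $N\subset M$ closed under subsets and countable unions; morphisms in $\mathsf{EMS}$: classes of premaps $f:X_0\to Y$ ($X\setminus X_0\in N_X$, $f^*M_Y\subset M_X$, $f^*N_Y\subset N_X$) modulo $f^*m\oplus g^*m\in N_X$ for all $m\in M_Y$. Finite measure: countably additive $\mu:M\to\mathbb{C}$ vanishing on $N$; faithful if vanishing on all measurable subsets of $m$ forces $m\in N$; $\sigma$-finite: admits a faithful finite measure. Strictly localizable: partition $\{X_i\}\subset M$ with $\sigma$-finite induced subspaces such that $A\in M$ (resp. $N$) iff $A\cap X_i\in M$ (resp. $N$) for all $i$. Compact: there is a compact class $K\subset M$ (subfamilies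 with finite intersection property have nonempty intersection) with every $m\in M\setminus N$ containing some $k\in K\setminus N$. $\mathsf{CSLEMS}$: full subcategory of $\mathsf{EMS}$ on compact strictly localizable spaces. *)

From HB Require Import structures.
From mathcomp Require Import all_boot all_order all_algebra.
From mathcomp Require Import all_classical all_reals.
From mathcomp Require Import topology normedtype sequences measure.
Set Implicit Arguments. Unset Strict Implicit. Unset Printing Implicit Defensive.
Import Order.TTheory GRing.Theory Num.Theory numFieldNormedType.Exports.
Local Open Scope classical_set_scope.
Local Open Scope ring_scope.

Definition directed_family (X : Type) (D : set (set X)) :=
  D !=set0 /\ forall A B, D A -> D B -> exists2 C, D C & A `|` B `<=` C.

Definition normal_open_measure (R : realType) (T : topologicalType)
    (nu : set T -> R) :=
  [/\ nu set0 = 0 /\ (forall U, open U -> 0 <= nu U),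
      (forall U1 U2, open U1 -> open U2 ->
          nu U1 + nu U2 = nu (U1 `|` U2) + nu (U1 `&` U2)),
      (forall U1 U2, open U1 -> open U2 -> U1 `<=` U2 -> nu U1 <= nu U2),
      (forall D : set (set T), D `<=` open -> directed_family D ->
          nu (\bigcup_(A in D) A) = sup [set nu A | A in D]) &
      (forall V, open V -> nu (closure V) = nu V)].

Definition hyperstonean (R : realType) (T : topologicalType) :=
  [/\ compact [set: T],
      hausdorff_space T,
      totally_disconnected [set: T],
      (forall U : set T, open U -> open (closure U)) &
      (forall U : set T, open U -> U !=set0 ->
          exists nu : set T -> R, normal_open_measure nu /\ nu U != 0)].

Definition open_map (T T' : topologicalType) (f : T -> T') :=
  forall U : set T, open U -> open (f @` U).

Definition nowhere_dense (T : topologicalType) (A : set T) :=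
  (closure A)° = set0.

Definition meager (T : topologicalType) (A : set T) :=
  exists F : (set T)^nat, (forall n, nowhere_dense (F n)) /\ A = \bigcup_n F n.

Definition symdiff (X : Type) (A B : set X) := (A `\` B) `|` (B `\` A).

Definition TM_N (T : topologicalType) : set (set T) := [set A | meager A].

Definition TM_M (T : topologicalType) : set (set T) :=
  [set A | exists U B, [/\ open U, meager B & A = symdiff U B]].

Definition enhanced_measurable (X : Type) (M N : set (set X)) :=
  [/\ sigma_algebra [set: X] M,
      N `<=` M,
      (forall A B, N A -> B `<=` A -> N B) &
      (forall F : (set X)^nat, (forall n, N (F n)) -> N (\bigcup_n F n))].

Definition countably_additive_on (R : realType) (X : Type)
    (M : set (set X)) (Y : set X) (mu : set X -> R) :=
  forall F : (set X)^nat,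
    (forall n, M (F n) /\ F n `<=` Y) -> trivIset setT F ->
    series (fun n => mu (F n)) @ \oo --> mu (\bigcup_n F n).

(* A finite (complex-valued) measure on the induced subspace on Y of (X,M,N):
   measurable sets of the subspace are the A in M with A `<=` Y, negligible
   sets those A in N with A `<=` Y.  A complex number is represented by its
   real and imaginary parts (mu_re, mu_im); countable additivity of a complex
   series is countable additivity of both parts. *)
Definition finite_measure_on (R : realType) (X : Type) (M N : set (set X))
    (Y : set X) (mu_re mu_im : set X -> R) :=
  [/\ countably_additive_on M Y mu_re,
      countably_additive_on M Y mu_im &
      (forall A, N A -> A `<=` Y -> mu_re A = 0 /\ mu_im A = 0)].

Definition faithful_on (R : realType) (X : Type) (M N : set (set X))
    (Y : set X) (mu_re mu_im : set X -> R) :=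
  forall m, M m -> m `<=` Y ->
    (forall A, M A -> A `<=` m -> mu_re A = 0 /\ mu_im A = 0) -> N m.

(* The induced subspace on Y is sigma-finite: it admits a faithful finite
   measure. *)
Definition sigma_finite_on (R : realType) (X : Type) (M N : set (set X))
    (Y : set X) :=
  exists mu_re mu_im : set X -> R,
    finite_measure_on M N Y mu_re mu_im /\ faithful_on M N Y mu_re mu_im.

Definition strictly_localizable (R : realType) (X : Type)
    (M N : set (set X)) :=
  exists (I : Type) (P : I -> set X),
    [/\ (forall i, M (P i)) /\ (forall i j, i <> j -> P i `&` P j = set0),
        \bigcup_i P i = [set: X],
        (forall i, sigma_finite_on R M N (P i)),
        (forall A, M A <-> forall i, M (A `&` P i)) &
        (forall A, N A <-> forall i, N (A `&` P i))].

Definition finite_intersection_property (X : Type) (F : set (set X)) :=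
  forall G, G `<=` F -> finite_set G -> G !=set0 ->
    (\bigcap_(A in G) A) !=set0.

Definition compact_class (X : Type) (K : set (set X)) :=
  forall F, F `<=` K -> F !=set0 -> finite_intersection_property F ->
    (\bigcap_(A in F) A) !=set0.

Definition compact_EMS (X : Type) (M N : set (set X)) :=
  exists K : set (set X),
    [/\ K `<=` M, compact_class K &
        forall m, M m -> ~ N m -> exists2 k, K k /\ ~ N k & k `<=` m].

Definition compact_strictly_localizable_EMS (R : realType) (X : Type)
    (M N : set (set X)) :=
  [/\ enhanced_measurable M N, compact_EMS M N & strictly_localizable R M N].

Arguments TM_M : clear implicits.
Arguments TM_N : clear implicits.

(* In a hyperstonean space every meager set is nowhere dense.  Indeed, let V
   be the interior of the closure of a union of nowhere dense sets F_n and nu a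
   normal measure with nu V > 0.  As the clopen sets form a base, the measure
   of the open complement of closure F_n is approximated from inside by clopen
   sets, so F_n lies in an open set G_n with nu G_n < nu V / 2^(n+2); since nu
   is countably subadditive on open sets and does not see boundaries,
   nu V <= nu (\bigcup_n G_n) <= nu V / 2.
   Consequently the sets with the Baire property agree with open (or clopen)
   sets up to nowhere dense sets, nonmeager ones contain nonmeager clopen sets,
   and clopen sets form a compact class.  For strict localizability, Zorn's
   lemma yields a maximal family of disjoint open sets C each carrying a normal
   measure nu that is faithful on C; maximality makes the complement of its
   union nowhere dense, and A |-> nu (C `&` U_A), where U_A is any open set
   equal to A up to a meager set, is a faithful finite measure on C. *)

From HB Require Import structures.
From mathcomp Require Import all_boot all_order all_algebra.
From mathcomp Require Import all_classical all_reals.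
From mathcomp Require Import topology normedtype sequences measure.
From mathcomp Require Import finmap ring lra.
Set Implicit Arguments. Unset Strict Implicit. Unset Printing Implicit Defensive.
Import Order.TTheory GRing.Theory Num.Theory numFieldNormedType.Exports.
Local Open Scope classical_set_scope.
Local Open Scope ring_scope.

Section symdiff.
Context {T : Type}.
Implicit Types A B C U V : set T.

Lemma symdiffE A B : symdiff A B = A `+` B. Proof. by []. Qed.

Lemma symdiff_subsetU A B : symdiff A B `<=` A `|` B.
Proof. by move=> x [[]|[]]; [left|right]. Qed.

Lemma symdiff_trans A B C : symdiff A C `<=` symdiff A B `|` symdiff B C.
Proof.
have -> : symdiff A C = symdiff (symdiff A B) (symdiff B C).
  by rewrite !symdiffE -setYA (setYA B) setYK set0Y.
exact: symdiff_subsetU.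
Qed.

Lemma symdiffCC A B : symdiff (~` A) (~` B) = symdiff A B.
Proof. by rewrite /symdiff !setDE !setCK setUC (setIC B) (setIC A). Qed.

Lemma symdiffI A B U V :
  symdiff (A `&` B) (U `&` V) `<=` symdiff A U `|` symdiff B V.
Proof.
move=> x; rewrite /symdiff /=.
by case: (pselect (A x)); case: (pselect (B x)); case: (pselect (U x));
  case: (pselect (V x)); tauto.
Qed.

Lemma symdiff_bigcup (F G : (set T)^nat) :
  symdiff (\bigcup_n F n) (\bigcup_n G n) `<=` \bigcup_n symdiff (F n) (G n).
Proof.
move=> x [[[n _ Fx] nG]|[[n _ Gx] nF]]; exists n => //.
  by left; split=> // Gnx; apply: nG; exists n.
by right; split=> // Fnx; apply: nF; exists n.
Qed.

End symdiff.

Section meager.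
Context {T : topologicalType}.
Implicit Types A B U : set T.

Lemma nowhere_denseS A B : B `<=` A -> nowhere_dense A -> nowhere_dense B.
Proof.
move=> BA ndA; apply/seteqP; split=> // x.
by rewrite -ndA; apply/interiorS/closureS.
Qed.

Lemma nowhere_dense0 : nowhere_dense (@set0 T).
Proof. by rewrite /nowhere_dense closure0 interior0. Qed.

Lemma open_nowhere_dense_eq0 U : open U -> nowhere_dense U -> U = set0.
Proof.
move=> oU ndU; apply/seteqP; split=> // x Ux; rewrite -ndU.
by apply: (interiorS (@subset_closure _ U)); rewrite (interior_id U).1.
Qed.

Lemma nowhere_dense_closureD U : open U -> nowhere_dense (closure U `\` U).
Proof.
move=> oU; have clD : closed (closure U `\` U).
  by rewrite setDE; apply: closedI; [exact: closed_closure|exact: open_closedC].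
rewrite /nowhere_dense -(closure_id _).1 //; apply/seteqP; split=> // x Dx.
have [clUx _] := interior_subset Dx.
by have [y [Uy [_ nUy]]] := clUx _ Dx.
Qed.

Lemma nowhere_dense_bigcup_disjoint (Fam : set (set T)) (B : set T -> set T) :
  (forall C, Fam C -> open C) -> trivIset Fam id ->
  (forall C, Fam C -> B C `<=` C /\ nowhere_dense (B C)) ->
  nowhere_dense (\bigcup_(C in Fam) B C).
Proof.
move=> oFam tFam ndB; apply/seteqP; split=> // y Oy.
set O := (closure (\bigcup_(C in Fam) B C))° in Oy.
have oO : open O := @open_interior _ _.
have [u [[C FC BCu] Ou]] := interior_subset Oy O (open_nbhs_nbhs (conj oO Oy)).
have oCO : open (C `&` O) by exact: openI (oFam C FC) oO.
have : C `&` O `<=` (closure (B C))°.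
  rewrite -open_subsetE // => w COw N Nw.
  have NCOw : nbhs w (N `&` (C `&` O)).
    by apply: filterI Nw (open_nbhs_nbhs (conj oCO COw)).
  have [v [[C' FC' BC'v] [Nv [Cv _]]]] := interior_subset COw.2 _ NCOw.
  have C'C : C' = C.
    by apply: tFam => //; exists v; split=> //; exact: (ndB C' FC').1.
  by exists v; split=> //; rewrite -C'C.
by move=> /(_ u (conj ((ndB C FC).1 u BCu) Ou)); rewrite (ndB C FC).2.
Qed.

Lemma nowhere_dense_meager A : nowhere_dense A -> meager A.
Proof. by exists (fun=> A); rewrite bigcup_const. Qed.

Lemma meagerS A B : B `<=` A -> meager A -> meager B.
Proof.
move=> BA [F [ndF AE]]; exists (fun n => B `&` F n); split.
  by move=> n; apply: nowhere_denseS (ndF n) => x [].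
by rewrite -setI_bigcupr -AE; apply/esym/setIidl.
Qed.

Lemma meager_bigcup (F : (set T)^nat) :
  (forall n, meager (F n)) -> meager (\bigcup_n F n).
Proof.
move=> /choice[G /all_and2[ndG FE]].
have /card_esym/ppcard_eqP[f] := card_nat2.
exists (fun k => G (f k).1 (f k).2); split=> [k|]; first exact: ndG.
apply/seteqP; split=> [x [n _]|x [k _ Gx]].
  rewrite FE => -[m _ Gx]; exists (f^-1%FUN (n, m)) => //.
  by rewrite invK ?in_setE.
by exists (f k).1; rewrite // FE; exists (f k).2.
Qed.

Lemma meagerU A B : meager A -> meager B -> meager (A `|` B).
Proof.
move=> mA mB; rewrite -bigcup2E; apply: meager_bigcup => -[|[|n]] //=.
exact/nowhere_dense_meager/nowhere_dense0.
Qed.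

Lemma meager_symdiff_trans A B C :
  meager (symdiff A B) -> meager (symdiff B C) -> meager (symdiff A C).
Proof.
by move=> mAB mBC; apply: meagerS (meagerU mAB mBC); exact: symdiff_trans.
Qed.

End meager.

Section Baire_property.
Context {T : topologicalType}.
Implicit Types A B U : set T.

Lemma TM_ME A : TM_M T A <-> exists2 U, open U & meager (symdiff A U).
Proof.
split=> [[U [B [oU mB ->]]]|[U oU mAU]].
  by exists U => //; rewrite !symdiffE setYC setYA setYK set0Y.
exists U, (symdiff A U); split=> //.
by rewrite !symdiffE setYC -setYA setYK setY0.
Qed.

Lemma open_TM_M U : open U -> TM_M T U.
Proof.
move=> oU; apply/TM_ME; exists U; rewrite // symdiffE setYK.
exact/nowhere_dense_meager/nowhere_dense0.
Qed.

Lemma meager_TM_M A : meager A -> TM_M T A.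
Proof.
by move=> mA; apply/TM_ME; exists set0; [exact: open0|rewrite symdiffE setY0].
Qed.

Lemma TM_MC A : TM_M T A -> TM_M T (~` A).
Proof.
move=> /TM_ME[U oU mAU]; apply/TM_ME; exists (~` closure U).
  exact/closed_openC/closed_closure.
rewrite symdiffCC; apply: meager_symdiff_trans mAU _.
apply: meagerS (nowhere_dense_meager (nowhere_dense_closureD oU)).
by move=> x [[Ux nclUx]|//]; case: nclUx; exact: subset_closure.
Qed.

Lemma TM_M_bigcup (F : (set T)^nat) :
  (forall n, TM_M T (F n)) -> TM_M T (\bigcup_n F n).
Proof.
move=> MF; apply/TM_ME.
have /choice[U UP] n : exists U, open U /\ meager (symdiff (F n) U).
  by have /TM_ME[U] := MF n; exists U.
exists (\bigcup_n U n); first by apply: bigcup_open => n _; case: (UP n).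
apply: meagerS (meager_bigcup (fun n => (UP n).2)).
exact: symdiff_bigcup.
Qed.

Lemma TM_MI A B : TM_M T A -> TM_M T B -> TM_M T (A `&` B).
Proof.
move=> /TM_ME[U oU mAU] /TM_ME[V oV mBV]; apply/TM_ME; exists (U `&` V).
  exact: openI.
by apply: meagerS (meagerU mAU mBV); exact: symdiffI.
Qed.

Definition open_rep (A : set T) : set T :=
  xget set0 [set U | open U /\ meager (symdiff A U)].

Lemma open_repP A :
  TM_M T A -> open (open_rep A) /\ meager (symdiff A (open_rep A)).
Proof.
move=> /TM_ME[U oU mAU].
have := @xgetPex _ set0 [set U | open U /\ meager (symdiff A U)].
by apply; exists U.
Qed.

Lemma TM_enhanced_measurable : enhanced_measurable (TM_M T) (TM_N T).
Proof.
split.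
- split; first exact/open_TM_M/open0.
    by move=> A MA; rewrite setTD; exact: TM_MC.
  exact: TM_M_bigcup.
- exact: meager_TM_M.
- by move=> A B mA BA; exact: meagerS mA.
- exact: meager_bigcup.
Qed.

End Baire_property.

Lemma countably_additive_on_cst0 {R : realType} {X : Type} (M : set (set X))
    (Y : set X) :
  countably_additive_on M Y (fun=> 0 : R).
Proof.
move=> F _ _; have -> : series (fun=> 0 : R) = fun=> 0.
  by apply/funext => n; rewrite seriesEord /= big1.
exact: cvg_cst.
Qed.

Lemma sigma_finite_meager (R : realType) {T : topologicalType} (Y : set T) :
  meager Y -> sigma_finite_on R (TM_M T) (TM_N T) Y.
Proof.
move=> mY; exists (fun=> 0), (fun=> 0); split.
  by split=> //; exact: countably_additive_on_cst0.
by move=> m _ mY' _; exact: meagerS mY.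
Qed.

Section preimage.
Context {S S' : topologicalType} (f : S -> S').
Hypotheses (f_cont : continuous f) (f_open : open_map f).

Lemma closure_preimage_subset (A : set S') :
  closure (f @^-1` A) `<=` f @^-1` closure A.
Proof.
move=> x clx B /f_cont/clx[y [Ay By]].
by exists (f y).
Qed.

Lemma nowhere_dense_preimage (A : set S') :
  nowhere_dense A -> nowhere_dense (f @^-1` A).
Proof.
move=> ndA; apply/seteqP; split=> // x Ix.
have : f @` (closure (f @^-1` A))° `<=` (closure A)°.
  rewrite -open_subsetE; last exact/f_open/open_interior.
  by move=> _ [y /interior_subset/closure_preimage_subset ? <-].
by rewrite ndA; apply; exists x.
Qed.

Lemma meager_preimage (A : set S') : meager A -> meager (f @^-1` A).
Proof.
move=> [F [ndF ->]]; exists (fun n => f @^-1` F n); split.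
  by move=> n; exact: nowhere_dense_preimage.
by rewrite preimage_bigcup.
Qed.

Lemma TM_M_preimage (A : set S') : TM_M S' A -> TM_M S (f @^-1` A).
Proof.
move=> [U [B [oU mB ->]]]; exists (f @^-1` U), (f @^-1` B); split.
- by move: f_cont => /continuousP; apply.
- exact: meager_preimage.
- by [].
Qed.

End preimage.

Lemma bigcup_bigsetU {T : Type} (G : (set T)^nat) :
  \bigcup_n \big[setU/set0]_(k < n) G k = \bigcup_n G n.
Proof.
apply/seteqP; split=> [x [n _]|x [n _ Gx]]; first exact: bigsetU_bigcup.
by exists n.+1 => //; exact: (bigsetU_sup (ltnSn n)).
Qed.

Lemma open_bigsetU {T : topologicalType} (G : (set T)^nat) n :
  (forall k, open (G k)) -> open (\big[setU/set0]_(k < n) G k).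
Proof. by move=> oG; rewrite -bigcup_mkord; apply: bigcup_open => k _. Qed.

Section normal_measure.
Context {R : realType} {T : topologicalType} (nu : set T -> R).
Hypothesis nuN : normal_open_measure nu.
Implicit Types (U V : set T) (G : (set T)^nat).

Lemma nu_set0 : nu set0 = 0. Proof. by case: nuN => -[]. Qed.

Lemma nu_ge0 U : open U -> 0 <= nu U.
Proof. by case: nuN => -[_ ?] *; auto. Qed.

Lemma nu_modular U V : open U -> open V ->
  nu U + nu V = nu (U `|` V) + nu (U `&` V).
Proof. by case: nuN => _ ? *; auto. Qed.

Lemma le_nu U V : open U -> open V -> U `<=` V -> nu U <= nu V.
Proof. by case: nuN => _ _ ? *; auto. Qed.

Lemma nu_bigcup_directed (D : set (set T)) :
  D `<=` open -> directed_family D ->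
  nu (\bigcup_(A in D) A) = sup [set nu A | A in D].
Proof. by case: nuN => _ _ _ ? *; auto. Qed.

Lemma nu_closure U : open U -> nu (closure U) = nu U.
Proof. by case: nuN => _ _ _ _ ?; auto. Qed.

Lemma nu_setU_disjoint U V : open U -> open V -> U `&` V = set0 ->
  nu (U `|` V) = nu U + nu V.
Proof. by move=> oU oV UV0; rewrite nu_modular // UV0 nu_set0 addr0. Qed.

Lemma nu_setU_le U V : open U -> open V -> nu (U `|` V) <= nu U + nu V.
Proof. by move=> oU oV; rewrite nu_modular // lerDl nu_ge0 //; exact: openI. Qed.

Lemma nu_bigcup_nondecreasing G : (forall n, open (G n)) ->
  {homo G : n m / (n <= m)%N >-> n `<=` m} ->
  nu (\bigcup_n G n) = sup (range (fun n => nu (G n))).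
Proof.
move=> oG ndG.
rewrite -(bigcup_image setT G id) nu_bigcup_directed ?image_comp //.
  by move=> _ [n _ <-].
split=> [|_ _ [n _ <-] [m _ <-]]; first by exists (G 0%N), 0%N.
exists (G (maxn n m)); first by exists (maxn n m).
by rewrite subUset; split; apply: ndG; [exact: leq_maxl|exact: leq_maxr].
Qed.

Lemma cvg_nu_nondecreasing G : (forall n, open (G n)) ->
  {homo G : n m / (n <= m)%N >-> n `<=` m} ->
  nu (G n) @[n --> \oo] --> nu (\bigcup_n G n).
Proof.
move=> oG ndG; rewrite nu_bigcup_nondecreasing //; apply: nondecreasing_cvgn.
  by move=> n m nm; apply: le_nu => //; exact: ndG.
exists (nu (\bigcup_n G n)) => _ [n _ <-].
by apply: le_nu => //; [exact: bigcup_open|exact: bigcup_sup].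
Qed.

Lemma nu_bigsetU_le G n : (forall k, open (G k)) ->
  nu (\big[setU/set0]_(k < n) G k) <= \sum_(k < n) nu (G k).
Proof.
move=> oG; elim: n => [|n IHn]; first by rewrite !big_ord0 nu_set0.
rewrite !big_ord_recr /=.
exact: le_trans (nu_setU_le (open_bigsetU _ oG) (oG n)) (lerD IHn _).
Qed.

Lemma nu_bigcup_le G (c : R) : (forall n, open (G n)) ->
  (forall n, \sum_(k < n) nu (G k) <= c) -> nu (\bigcup_n G n) <= c.
Proof.
move=> oG Gc; rewrite -bigcup_bigsetU nu_bigcup_nondecreasing.
- apply: ge_sup => [|_ [n _ <-]].
    by exists (nu (\big[setU/set0]_(k < 0) G k)), 0%N.
  exact: le_trans (nu_bigsetU_le n oG) (Gc n).
- by move=> n; exact: open_bigsetU.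
- exact: subset_bigsetU.
Qed.

Lemma cvg_nu_series G : (forall n, open (G n)) -> trivIset setT G ->
  series (fun n => nu (G n)) @ \oo --> nu (\bigcup_n G n).
Proof.
move=> oG /trivIsetP tG; rewrite -bigcup_bigsetU.
have -> : series (fun n => nu (G n)) = fun n => nu (\big[setU/set0]_(k < n) G k).
  apply/funext=> n; rewrite seriesEord /=; elim: n => [|n IHn].
    by rewrite !big_ord0 nu_set0.
  rewrite !big_ord_recr /= IHn nu_setU_disjoint //; first exact: open_bigsetU.
  rewrite -bigcup_mkord setI_bigcupl; apply: bigcup0 => k /= kn.
  by apply: tG => //; rewrite neq_ltn kn.
apply: cvg_nu_nondecreasing; last exact: subset_bigsetU.
by move=> n; exact: open_bigsetU.
Qed.

Lemma nu_bigcup_null :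
  nu (\bigcup_(W in [set W | open W /\ nu W = 0]) W) = 0.
Proof.
set D := [set W | open W /\ nu W = 0].
have D0 : D set0 by split; [exact: open0|exact: nu_set0].
rewrite nu_bigcup_directed; first last.
- split=> [|A B [oA nuA] [oB nuB]]; first by exists set0.
  exists (A `|` B) => //; split; first exact: openU.
  apply/eqP; rewrite eq_le nu_ge0 ?andbT; last exact: openU.
  by have := nu_setU_le oA oB; rewrite nuA nuB addr0.
- by move=> W [].
suff -> : [set nu W | W in D] = [set 0] by exact: sup1.
apply/seteqP; split=> [_ [W [_ ->] <-] //|_ ->].
by exists set0 => //; exact: nu_set0.
Qed.

End normal_measure.

Lemma compact_class_closed {T : topologicalType} :
  compact [set: T] -> compact_class (@closed T).
Proof.
move=> cT F Fcl [K0 FK0] fipF.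
have [p0 _] : \bigcap_(A in [set K0]) A !=set0.
  apply: fipF; [by move=> A ->|exact: finite_set1|by exists K0].
have finIF : finI F id.
  move=> D DF; have [[A DA]|D0] := pselect ([set A : set T | A \in D] !=set0).
    by apply: fipF (finite_fset D) _ => [B /DF|]; [rewrite in_setE|exists A].
  by exists p0 => A DA; case: D0; exists A.
have PF := finI_filter finIF.
have [|p [_ clp]] := cT _ PF; first exact: filterT.
exists p => K FK; rewrite (closure_id K).1; last exact: Fcl.
by move=> B /clp; apply; exists K => //; exact: finI_from1.
Qed.

Section hyperstonean.
Context {R : realType} {T : topologicalType}.
Hypothesis hT : hyperstonean R T.
Implicit Types (A B U V : set T) (nu : set T -> R).

Lemma open_closure U : open U -> open (closure U).
Proof. by case: hT => _ _ _ + _; apply. Qed.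

Lemma exists_normal_measure U : open U -> U !=set0 ->
  exists2 nu : set T -> R, normal_open_measure nu & 0 < nu U.
Proof.
move=> oU U0; case: hT => _ _ _ _ /(_ U oU U0)[nu [nuN nuU]].
by exists nu; rewrite // lt0r nuU nu_ge0.
Qed.

Lemma clopen_subset_nbhs U x : open U -> U x ->
  exists2 K, clopen K /\ K x & K `<=` U.
Proof.
move=> oU Ux; case: hT => cT hsT _ _ _.
have [W Wx clWU] : filter_from (nbhs x) closure U.
  by apply: (compact_regular hsT cT filterT); apply: open_nbhs_nbhs.
exists (closure W°).
  by split; [split; [exact/open_closure/open_interior|exact: closed_closure]|
    exact: subset_closure].
exact: subset_trans (closureS (@interior_subset _ W)) clWU.
Qed.

Lemma nu_clopen_inner nu U (eps : R) : normal_open_measure nu -> open U ->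
  0 < eps -> exists2 K, clopen K /\ K `<=` U & nu U - eps < nu K.
Proof.
move=> nuN oU eps0; set D := [set K | clopen K /\ K `<=` U].
have D0 : D set0 by split=> //; exact: clopen0.
have UE : \bigcup_(K in D) K = U.
  apply/seteqP; split=> [x [K [_ KU] /KU]|x Ux] //.
  by have [K [clK Kx] KU] := clopen_subset_nbhs oU Ux; exists K.
have : nu U - eps < sup [set nu K | K in D].
  rewrite -(nu_bigcup_directed nuN) ?UE ?ltrBlDr ?ltrDl //.
    by move=> K [[]].
  split=> [|A B [clA AU] [clB BU]]; first by exists set0.
  by exists (A `|` B) => //; split; [exact: clopenU|rewrite subUset].
by case/sup_gt => [|_ [K DK <-]]; [exists (nu set0), set0|exists K].
Qed.

Lemma nu_nowhere_dense_cover nu A (eps : R) : normal_open_measure nu ->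
  nowhere_dense A -> 0 < eps -> exists2 G, open G /\ A `<=` G & nu G < eps.
Proof.
move=> nuN ndA eps0; set O := ~` closure A.
have oO : open O by exact/closed_openC/closed_closure.
have nuO : nu O = nu setT.
  by rewrite -(nu_closure nuN oO) closure_setC ndA setC0.
have [K [[oK clK] KO] ltK] := nu_clopen_inner nuN oO eps0.
exists (~` K); first split.
- exact: closed_openC.
- by move=> x Ax Kx; apply: (KO x Kx); exact: subset_closure.
have := nu_modular nuN oK (closed_openC clK).
rewrite setUv setICr (nu_set0 nuN) addr0.
lra.
Qed.

Lemma nowhere_dense_bigcup (F : (set T)^nat) :
  (forall n, nowhere_dense (F n)) -> nowhere_dense (\bigcup_n F n).
Proof.
move=> ndF; apply/seteqP; split=> // x Vx.
set V := (closure (\bigcup_n F n))° in Vx.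
have oV : open V := @open_interior _ _.
have [nu nuN nuV] := exists_normal_measure oV (ex_intro _ x Vx).
pose a := nu V / 4; pose q : R := 2^-1.
have /choice[G GP] n :
    exists G, (open G /\ F n `<=` G) /\ nu G < geometric a q n.
  have [|G] := nu_nowhere_dense_cover nuN (ndF n) (_ : 0 < geometric a q n).
    by rewrite /= mulr_gt0 ?exprn_gt0 ?invr_gt0 // divr_gt0.
  by exists G.
have oG n : open (G n) by case: (GP n) => -[].
have oUG : open (\bigcup_n G n) by apply: bigcup_open => n _.
have : nu (\bigcup_n G n) <= a * (1 - q)^-1.
  apply: nu_bigcup_le => // n.
  apply: le_trans (geometric_le_lim n _ _ _); last 3 first.
  - by rewrite divr_ge0 // ltW.
  - by rewrite invr_gt0.
  - by rewrite gtr0_norm ?invf_lt1 ?invr_gt0 //; lra.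
  by rewrite seriesEord ler_sum // => k _; apply: ltW; case: (GP k).
have : nu V <= nu (\bigcup_n G n).
  rewrite -(nu_closure nuN oUG); apply: le_nu (open_closure oUG) _ => //.
  apply: subset_trans (@interior_subset _ _) (closureS _).
  by move=> y [n _ /(proj2 (proj1 (GP n)))]; exists n.
rewrite /a /q; have -> : (1 - 2^-1 : R)^-1 = 2 by field.
lra.
Qed.

Lemma meagerE A : meager A <-> nowhere_dense A.
Proof.
split=> [[F [ndF ->]]|]; first exact: nowhere_dense_bigcup.
exact: nowhere_dense_meager.
Qed.

Lemma open_meager_eq0 U : open U -> meager U -> U = set0.
Proof. by move=> oU /meagerE; exact: open_nowhere_dense_eq0. Qed.

Lemma closure_eq_meager_symdiff U V : open U -> open V ->
  meager (symdiff U V) -> closure U = closure V.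
Proof.
have sub U' V' : open U' -> open V' -> meager (symdiff U' V') ->
    closure U' `<=` closure V'.
  move=> oU' oV' mUV; rewrite [X in _ `<=` X](closure_id _).1; last first.
    exact: closed_closure.
  apply: closureS => x U'x; apply: contrapT => nclV'x.
  have UV0 : U' `&` ~` closure V' = set0.
    apply: open_meager_eq0; first exact/openI/closed_openC/closed_closure.
    by apply: meagerS mUV => y [U'y nclV'y]; left; split=> // /subset_closure.
  by have : (U' `&` ~` closure V') x by []; rewrite UV0.
move=> oU oV mUV; apply/seteqP; split; first exact: sub.
by apply: sub => //; rewrite symdiffE setYC.
Qed.

Lemma nu_eq_meager_symdiff nu U V : normal_open_measure nu ->
  open U -> open V -> meager (symdiff U V) -> nu U = nu V.
Proof.
move=> nuN oU oV mUV; rewrite -(nu_closure nuN oU) -(nu_closure nuN oV).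
by rewrite (closure_eq_meager_symdiff oU oV mUV).
Qed.

Lemma TM_compact : compact_EMS (TM_M T) (TM_N T).
Proof.
case: hT => cT _ _ _ _; exists clopen; split.
- by move=> K [oK _]; exact: open_TM_M.
- by move=> F FK; apply: compact_class_closed => // K /FK[].
move=> m Mm nm; have [oU mmU] := open_repP Mm.
set U := open_rep m in oU mmU; set B := symdiff m U in mmU.
have [x [Ux nclBx]] : exists x, U x /\ ~ closure B x.
  apply: contrapT => /forallNP UB; apply: nm.
  have U0 : U = set0.
    have UclB : U `<=` (closure B)°.
      by rewrite -open_subsetE // => z Uz; apply: contrapT => /(conj Uz)/UB.
    have ndB : nowhere_dense B by apply/meagerE.
    by apply/seteqP; split=> // y /UclB; rewrite ndB.
  by apply: meagerS mmU => y my; left; split=> //; rewrite U0.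
have oUB : open (U `&` ~` closure B).
  exact/openI/closed_openC/closed_closure.
have [K [clK Kx] KUB] := clopen_subset_nbhs oUB (conj Ux nclBx).
exists K; first by split=> // /(open_meager_eq0 clK.1) K0; rewrite K0 in Kx.
move=> y /KUB[Uy nclBy]; apply: contrapT => nmy; apply: nclBy.
by apply: subset_closure; right.
Qed.

Lemma meager_glue (Fam : set (set T)) X :
  (forall C, Fam C -> open C) -> trivIset Fam id ->
  meager (~` \bigcup_(C in Fam) C) -> (forall C, Fam C -> meager (X `&` C)) ->
  meager X.
Proof.
move=> oFam tFam mP0 mXC.
apply: meagerS (meagerU mP0 (_ : meager (\bigcup_(C in Fam) (X `&` C)))).
  move=> x Xx; have [[C FC Cx]|] := pselect ((\bigcup_(C in Fam) C) x).
    by right; exists C.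
  by left.
apply/meagerE/nowhere_dense_bigcup_disjoint => // C FC.
by split; [move=> ? []|exact/meagerE/mXC].
Qed.

Lemma TM_M_glue (Fam : set (set T)) A :
  (forall C, Fam C -> open C) -> trivIset Fam id ->
  meager (~` \bigcup_(C in Fam) C) -> (forall C, Fam C -> TM_M T (A `&` C)) ->
  TM_M T A.
Proof.
move=> oFam tFam mP0 MAC; apply/TM_ME.
exists (\bigcup_(C in Fam) (C `&` open_rep (A `&` C))).
  apply: bigcup_open => C FC.
  exact: openI (oFam C FC) (open_repP (MAC C FC)).1.
apply: (meager_glue oFam tFam mP0) => C FC.
apply: meagerS (open_repP (MAC C FC)).2.
move=> x [[[Ax nUx]|[[C' FC' [C'x repx]] nAx]] Cx].
  by left; split=> // repx; apply: nUx; exists C.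
have C'C : C' = C by apply: tFam => //; exists x.
by right; rewrite -C'C; split=> // -[].
Qed.

Section rep_measure.
Variables (nu : set T -> R) (C : set T).
Hypotheses (nuN : normal_open_measure nu) (oC : open C).

Let mu A := nu (C `&` open_rep A).

Lemma rep_measureE A U : TM_M T A -> open U -> meager (symdiff A U) ->
  mu A = nu (C `&` U).
Proof.
move=> MA oU mAU; have [orep mArep] := open_repP MA.
apply: (nu_eq_meager_symdiff nuN); [exact: openI|exact: openI|].
rewrite symdiffE -setIYr; apply: meagerS (@subIsetr _ _ _) _.
by apply: meager_symdiff_trans mAU; rewrite symdiffE setYC.
Qed.

Lemma rep_measure_meager A : meager A -> mu A = 0.
Proof.
move=> mA; rewrite (@rep_measureE _ set0) ?setI0 ?nu_set0 //.
- exact: meager_TM_M.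
- exact: open0.
- by rewrite symdiffE setY0.
Qed.

Lemma rep_measure_additive : countably_additive_on (TM_M T) C mu.
Proof.
move=> F /all_and2[MF _] tF.
have [orep mrep] := all_and2 (fun n => open_repP (MF n)).
set W := fun n => C `&` open_rep (F n).
have oW n : open (W n) by exact: openI.
rewrite (@rep_measureE _ (\bigcup_n open_rep (F n))).
- rewrite setI_bigcupr; apply: (cvg_nu_series nuN oW).
  apply/trivIsetP => n m _ _ nm.
  apply: open_meager_eq0; first exact: openI.
  apply: meagerS (meagerU (mrep n) (mrep m)) => x [[_ repn] [_ repm]].
  have [Fn|] := pselect (F n x); last by left; right.
  have [Fm|] := pselect (F m x); last by right; right.
  have nmE : n = m by apply: tF => //; exists x.
  by rewrite nmE eqxx in nm.
- exact: TM_M_bigcup.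
- exact: bigcup_open.
- by apply: meagerS (meager_bigcup mrep); exact: symdiff_bigcup.
Qed.

Lemma rep_measure_faithful :
  (forall W, open W -> W `<=` C -> W !=set0 -> 0 < nu W) ->
  faithful_on (TM_M T) (TM_N T) C mu (fun=> 0).
Proof.
move=> nu_pos m Mm mC /(_ m Mm (@subset_refl _ m))[mu0 _].
have [orep mrep] := open_repP Mm.
have rep0 : C `&` open_rep m = set0.
  apply/seteqP; split=> // x Cx.
  have := nu_pos _ (openI oC orep) (@subIsetl _ _ _) (ex_intro _ x Cx).
  by rewrite -/(mu m) mu0 ltxx.
apply: meagerS mrep => x mx; left; split=> // repx.
suff : (C `&` open_rep m) x by rewrite rep0.
by split=> //; exact: mC.
Qed.

End rep_measure.

Definition faithful_normal_support (C : set T) :=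
  exists2 nu : set T -> R, normal_open_measure nu &
    forall W, open W -> W `<=` C -> W !=set0 -> 0 < nu W.

Lemma sigma_finite_faithful_support C : open C -> faithful_normal_support C ->
  sigma_finite_on R (TM_M T) (TM_N T) C.
Proof.
move=> oC [nu nuN nu_pos].
exists (fun A => nu (C `&` open_rep A)), (fun=> 0).
split; last exact: rep_measure_faithful.
split; [exact: rep_measure_additive|exact: countably_additive_on_cst0|].
by move=> A mA _; split=> //; exact: rep_measure_meager.
Qed.

Lemma exists_faithful_normal_support V : open V -> V !=set0 ->
  exists2 C, [/\ open C, C !=set0 & C `<=` closure V] &
    faithful_normal_support C.
Proof.
move=> oV V0; have [nu nuN nuV] := exists_normal_measure oV V0.
set Z := \bigcup_(W in [set W | open W /\ nu W = 0]) W.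
have oZ : open Z by apply: bigcup_open => W [].
have nuZ : nu Z = 0 := nu_bigcup_null nuN.
exists (closure V `&` ~` closure Z); first split.
- exact/openI/closed_openC/closed_closure/open_closure.
- apply/set0P/negP => /eqP; rewrite -setDE setD_eq0 => VZ.
  have := le_nu nuN (open_closure oV) (open_closure oZ) VZ.
  by rewrite (nu_closure nuN oV) (nu_closure nuN oZ) nuZ leNgt nuV.
- exact: subIsetl.
exists nu => // W oW WC [w Ww]; rewrite lt0r nu_ge0 // andbT.
apply/eqP => nuW0; have [_] := WC w Ww; apply.
by apply: subset_closure; exists W.
Qed.

Definition faithful_disjoint_family (Fam : set (set T)) :=
  (forall C, Fam C -> open C /\ faithful_normal_support C) /\ trivIset Fam id.

Lemma exists_maximal_faithful_family :
  exists2 Fam, faithful_disjoint_family Fam &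
  forall C, open C -> C !=set0 -> faithful_normal_support C ->
    ~ (forall C', Fam C' -> C' `&` C = set0).
Proof.
have [|Fam [[FamP tFam] maxFam]] := @Zorn_bigcup _ faithful_disjoint_family.
  move=> F FP Ftot; split=> [C [X FX XC]|C C' [X FX XC] [Y FY YC']].
    exact: (FP X FX).1.
  have [XY|YX] := Ftot X Y FX FY.
  - exact: (FP Y FY).2 C C' (XY C XC) YC'.
  - exact: (FP X FX).2 C C' XC (YX C' YC').
exists Fam => // C oC [x Cx] sC disjC.
have nFC : ~ Fam C by move=> FC; have : (C `&` C) x by []; rewrite disjC.
apply: (maxFam (Fam `|` [set C])).
  by split=> [D FD|/(_ C (or_intror erefl))]; [left|].
split=> [D [/FamP|->]|D D' [FD|->] [FD'|->] /= DD'] //.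
- exact: tFam.
- by case: DD'; rewrite disjC.
- by case: DD'; rewrite setIC disjC.
Qed.

Lemma exists_faithful_family_meager_complement : exists2 Fam,
  faithful_disjoint_family Fam & meager (~` \bigcup_(C in Fam) C).
Proof.
have [Fam [FamP tFam] maxFam] := exists_maximal_faithful_family.
have oU : open (\bigcup_(C in Fam) C) by apply: bigcup_open => C /FamP[].
exists Fam => //; apply/meagerE.
rewrite /nowhere_dense -(closure_id _).1; last exact: open_closedC.
apply/seteqP; split=> // x Vx.
have [C [oC C0 CV] sC] :=
  exists_faithful_normal_support (@open_interior _ _) (ex_intro _ x Vx).
apply: (maxFam C oC C0 sC) => C' FC'; apply/seteqP; split=> // y [C'y Cy].
have [z [Vz C'z]] := CV y Cy C' (open_nbhs_nbhs (conj (FamP C' FC').1 C'y)).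
by apply: (interior_subset Vz); exists C'.
Qed.

Lemma TM_strictly_localizable_of_family (Fam : set (set T)) :
  (forall C, Fam C -> open C) ->
  (forall C, Fam C -> sigma_finite_on R (TM_M T) (TM_N T) C) ->
  trivIset Fam id -> meager (~` \bigcup_(C in Fam) C) ->
  strictly_localizable R (TM_M T) (TM_N T).
Proof.
move=> oFam sfFam tFam mP0.
pose P (i : option {C | Fam C}) :=
  if i is Some C then sval C else ~` \bigcup_(C in Fam) C.
exists (option {C | Fam C}), P; split.
- split=> [[[C FC]|]|[[C FC]|] [[C' FC']|] //= neq]; rewrite /=.
  + exact/open_TM_M/oFam.
  + exact: meager_TM_M.
  + apply/seteqP; split=> // x [Cx C'x]; apply: neq; congr Some; apply: eq_exist.
    by apply: tFam => //; exists x.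
  + by apply/seteqP; split=> // x [Cx]; apply; exists C.
  + by apply/seteqP; split=> // x [+ C'x]; apply; exists C'.
- apply/seteqP; split=> // x _.
  have [[C FC Cx]|nx] := pselect ((\bigcup_(C in Fam) C) x).
    by exists (Some (exist _ C FC)).
  by exists None.
- by case=> [[C FC]|] /=; [exact: sfFam|exact: sigma_finite_meager].
- move=> A; split=> [MA i|MAP].
    apply: TM_MI MA _; case: i => [[C FC]|] /=.
      exact/open_TM_M/oFam.
    exact: meager_TM_M.
  apply: (TM_M_glue oFam tFam mP0) => C FC.
  exact: (MAP (Some (exist _ C FC))).
- move=> A; split=> [mA i|mAP]; first by apply: meagerS mA => x [].
  apply: (meager_glue oFam tFam mP0) => C FC.
  exact: (mAP (Some (exist _ C FC))).
Qed.

Lemma TM_strictly_localizable : strictly_localizable R (TM_M T) (TM_N T).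
Proof.
have [Fam [FamP tFam] mP0] := exists_faithful_family_meager_complement.
apply: (TM_strictly_localizable_of_family _ _ tFam mP0) => C /FamP[oC sC] //.
exact: sigma_finite_faithful_support.
Qed.

End hyperstonean.

Theorem mainTheorem7 (R : realType) :
  (forall S : topologicalType, hyperstonean R S ->
     compact_strictly_localizable_EMS R (TM_M S) (TM_N S)) /\
  (forall (S S' : topologicalType) (f : S -> S'),
     hyperstonean R S -> hyperstonean R S' ->
     continuous f -> open_map f ->
     (forall m, TM_M S' m -> TM_M S (f @^-1` m)) /\
     (forall n, TM_N S' n -> TM_N S (f @^-1` n))).
Proof.
split=> [S hS|S S' f _ _ f_cont f_open].
  split; first exact: TM_enhanced_measurable.
    exact: TM_compact hS.
  exact: TM_strictly_localizable hS.
by split=> A; [exact: TM_M_preimage|exact: meager_preimage].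
Qed.
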